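(* Let $K(x,y)=\dfrac{\log\frac{|x-y|}{\langle x\rangle}}{1+\log\langle y\rangle}$ for $x,y\in\mathbb{R}^2$. For any $p\in[1,\infty)$ and $\varepsilon>0$ there exist a function $W(x,y)\ge0$ with $\|W\|_{L^\infty_yL^p_x}\le\varepsilon$ and a constant $C_0$ such that $|K(x,y)|\le C_0+W(x,y)$ for all $(x,y)\in\mathbb{R}^{2+2}$.
   Context: $\langle x\rangle=(1+|x|^2)^{1/2}$; $\|W\|_{L^\infty_yL^p_x}=\sup_y\|W(\cdot,y)\|_{L^p(\mathbb{R}^2)}$. *)

From HB Require Import structures.
From mathcomp Require Import all_boot all_order all_algebra.
From mathcomp Require Import all_classical all_reals all_analysis.
Set Implicit Arguments. Unset Strict Implicit. Unset Printing Implicit Defensive.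
Import Order.TTheory GRing.Theory Num.Theory.
Local Open Scope ring_scope.

Definition euclid_norm2 {R : realType} (x : R * R) : R :=
  Num.sqrt (x.1 ^+ 2 + x.2 ^+ 2).

Definition jbracket {R : realType} (x : R * R) : R :=
  Num.sqrt (1 + x.1 ^+ 2 + x.2 ^+ 2).

Definition Kker {R : realType} (x y : R * R) : R :=
  ln (euclid_norm2 (x.1 - y.1, x.2 - y.2) / jbracket x) / (1 + ln (jbracket y)).

Definition leb2 {R : realType} :=
  ((@lebesgue_measure R) \x (@lebesgue_measure R))%E.

(* Let s = |x - y|_oo. Comparing |x - y|, <x> and <y> gives
   |K(x,y)| <= 1 + log 2 + max(0, -log s), so the only singularity of K is
   logarithmic on the diagonal. Since -log s <= p s^(-1/p), it is absorbed by
   W = p s^(-1/p) on {s <= 2^-n} (and W = 0 elsewhere), at the price of the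
   constant C0 = 1 + (n+1) log 2. Pointwise W^p = p^p / s is dominated by
   sum_{k >= n} 2 p^p 2^k 1_{s <= 2^-k}, and {s <= 2^-k} is a square of area
   4^(1-k), so int W(., y)^p <= 16 p^p 2^-n, which is below eps^p once n is
   large. *)

From HB Require Import structures.
From mathcomp Require Import all_boot all_order all_algebra.
From mathcomp Require Import all_classical all_reals all_analysis.
From mathcomp Require Import ring lra measurable_realfun.
Import Order.TTheory GRing.Theory Num.Theory.
Local Open Scope classical_set_scope.
Local Open Scope ring_scope.
Set Implicit Arguments. Unset Strict Implicit. Unset Printing Implicit Defensive.

Section logarithms.
Variable R : realType.
Implicit Types (a u s X Y : R) (m n : nat).

Lemma ln2_gt0 : 0 < ln (2 : R).
Proof. by rewrite ln_gt0// ltr1n. Qed.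

Lemma abs_ln_div_le a X Y : 0 < a -> 0 < X -> 1 <= Y ->
  a <= 2 * X * Y -> X <= Y + a ->
  `|ln (a / X)| <= ln 2 + ln Y + Num.max 0 (- ln a).
Proof.
move=> a0 X0 Y1 aXY XYa; have Y0 : 0 < Y by exact: lt_le_trans Y1.
have lnM3 (b c d : R) : 0 < b -> 0 < c -> 0 < d -> ln (b * c * d) = ln b + ln c + ln d.
  by move=> *; rewrite !lnM ?posrE ?mulr_gt0.
have m0 : 0 <= Num.max 0 (- ln a) by rewrite le_max lexx.
have m1 : - ln a <= Num.max 0 (- ln a) by rewrite le_max lexx orbT.
have up : ln a <= ln 2 + ln X + ln Y.
  by rewrite -lnM3// ler_ln ?posrE ?mulr_gt0// mulrA.
have lo : ln X <= ln 2 + ln Y + Num.max 0 (ln a).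
  have [a1|a1] := leP 1 a.
    rewrite (max_idPr (ln_ge0 a1)) -lnM3// ler_ln ?posrE ?mulr_gt0//; nra.
  rewrite (max_idPl (ln_le0 (ltW a1))) addr0 -lnM ?posrE// ler_ln ?posrE ?mulr_gt0//; nra.
rewrite ln_div ?posrE// ler_norml; apply/andP; split; last by lra.
have : Num.max 0 (ln a) - ln a <= Num.max 0 (- ln a).
  by have [h|h] := leP 0 (ln a); lra.
lra.
Qed.

Lemma expR_mul_ln2 m : expR (m%:R * ln 2) = 2 ^+ m :> R.
Proof. by rewrite expRM_natl lnK ?posrE. Qed.

Lemma le_exp2N_of_ln s m : 0 <= s -> ln s <= - (m%:R * ln 2) -> s <= (2 ^+ m)^-1.
Proof.
rewrite le0r => /orP[/eqP->|s0 hs]; first by rewrite invr_ge0 exprn_ge0.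
by rewrite -expR_mul_ln2 -expRN -[s]lnK ?posrE// ler_expR.
Qed.

Lemma dyadic_level u n : u <= - (n%:R * ln 2) ->
  exists m, [/\ (n <= m)%N, u <= - (m%:R * ln 2) & expR (- u) <= 2 * 2 ^+ m].
Proof.
move=> hu; have l2 := ln2_gt0; set t := - u / ln 2.
have t_ge : n%:R <= t by rewrite ler_pdivlMr// lerNr.
have t0 : 0 <= t := le_trans (ler0n _ _) t_ge.
have /andP[mt tm] := truncn_itv t0.
exists (Num.truncn t); split.
- by rewrite truncn_ge_nat.
- by rewrite lerNr -ler_pdivlMr.
- rewrite -exprS -expR_mul_ln2 ler_expR -ler_pdivrMr//; exact: ltW.
Qed.
End logarithms.

Section plane_geometry.
Variable R : realType.
Implicit Types (a b : R) (x y : R * R).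

Lemma sqrtr_le_of_sqr a b : 0 <= b -> a <= b ^+ 2 -> Num.sqrt a <= b.
Proof. by move=> b0 ab; rewrite -(ger0_norm b0) -sqrtr_sqr ler_wsqrtr. Qed.

Lemma le_sqrtr_of_sqr a b : 0 <= b -> b ^+ 2 <= a -> b <= Num.sqrt a.
Proof. by move=> b0 ab; rewrite -(ger0_norm b0) -sqrtr_sqr ler_wsqrtr. Qed.

Definition supdist x y : R := Num.max `|x.1 - y.1| `|x.2 - y.2|.

Let dist x y := euclid_norm2 (x.1 - y.1, x.2 - y.2).

Lemma sqr_jbracket x : jbracket x ^+ 2 = 1 + x.1 ^+ 2 + x.2 ^+ 2.
Proof. by rewrite sqr_sqrtr// !addr_ge0 ?sqr_ge0. Qed.

Lemma sqr_dist x y : dist x y ^+ 2 = (x.1 - y.1) ^+ 2 + (x.2 - y.2) ^+ 2.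
Proof. by rewrite sqr_sqrtr// addr_ge0 ?sqr_ge0. Qed.

Lemma jbracket_ge1 x : 1 <= jbracket x.
Proof. by apply: le_sqrtr_of_sqr; rewrite // expr1n -addrA lerDl addr_ge0 ?sqr_ge0. Qed.

Lemma supdist_le_dist x y : supdist x y <= dist x y.
Proof.
by rewrite ge_max; apply/andP; split; apply: le_sqrtr_of_sqr => //=;
  rewrite real_normK ?num_real// ?lerDl ?lerDr sqr_ge0.
Qed.

Lemma dist_le_jbracketM x y : dist x y <= 2 * jbracket x * jbracket y.
Proof.
apply: sqrtr_le_of_sqr; first by rewrite !mulr_ge0 ?sqrtr_ge0.
rewrite !exprMn !sqr_jbracket; case: x y => [x1 x2] [y1 y2] /=.
have := sqr_ge0 (x1 + y1); have := sqr_ge0 (x2 + y2).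
have : 0 <= (x1 ^+ 2 + x2 ^+ 2) * (y1 ^+ 2 + y2 ^+ 2) by rewrite mulr_ge0 ?addr_ge0 ?sqr_ge0.
nra.
Qed.

Lemma jbracket_le_add x y : jbracket x <= jbracket y + dist x y.
Proof.
have Y0 : 0 <= jbracket y by exact: sqrtr_ge0.
have a0 : 0 <= dist x y by exact: sqrtr_ge0.
apply: sqrtr_le_of_sqr; first exact: addr_ge0.
have := sqr_dist x y; have := sqr_jbracket y.
case: x y Y0 a0 => [x1 x2] [y1 y2] /=; set Y := jbracket _; set a := dist _ _ => Y0 a0 Y2 a2.
have cs : y1 * (x1 - y1) + y2 * (x2 - y2) <= Y * a.
  have : (y1 * (x1 - y1) + y2 * (x2 - y2)) ^+ 2 <= (Y * a) ^+ 2.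
    rewrite exprMn Y2 a2 /=; have := sqr_ge0 (y1 * (x2 - y2) - y2 * (x1 - y1)); nra.
  have := mulr_ge0 Y0 a0; nra.
nra.
Qed.

Lemma supdist_gt0 x y : x <> y -> 0 < supdist x y.
Proof.
case: x y => [x1 x2] [y1 y2] xy; rewrite /supdist /= lt_max !normr_gt0 !subr_eq0.
by apply: contra_notT xy; rewrite negb_or !negbK => /andP[/eqP-> /eqP->].
Qed.

Lemma Kker_le x y : x <> y ->
  `|Kker x y| <= 1 + ln 2 + Num.max 0 (- ln (supdist x y)).
Proof.
move=> xy; have s0 := supdist_gt0 xy.
have a0 : 0 < dist x y := lt_le_trans s0 (supdist_le_dist x y).
have L0 : 0 <= ln (jbracket y) := ln_ge0 (jbracket_ge1 y).
have X0 : 0 < jbracket x := lt_le_trans ltr01 (jbracket_ge1 x).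
have hN := abs_ln_div_le a0 X0 (jbracket_ge1 y) (dist_le_jbracketM x y) (jbracket_le_add x y).
have hM : Num.max 0 (- ln (dist x y)) <= Num.max 0 (- ln (supdist x y)).
  by rewrite le_max2// lerN2 ler_ln ?posrE// supdist_le_dist.
have M0 : 0 <= Num.max 0 (- ln (supdist x y)) by rewrite le_max lexx.
rewrite /Kker -/(dist x y) normrM normfV [X in _ / X]ger0_norm ?addr_ge0//.
have l2 := @ln2_gt0 R.
rewrite ler_pdivrMr ?ltr_pwDl//; nra.
Qed.
End plane_geometry.

Section weight.
Variable R : realType.
Implicit Types (u : R) (x y : R * R).

(* [W] is written through [u = ln s], in which it is nonincreasing, hence measurable. *)
Definition weight_profile (p : R) (n : nat) u : R :=
  if u <= - (n%:R * ln 2) then p * expR (- u / p) else 0.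

Definition weight (p : R) (n : nat) x y : R := weight_profile p n (ln (supdist x y)).

Variables (p : R) (n : nat).
Hypothesis p_gt0 : 0 < p.

Lemma weight_profile_ge0 u : 0 <= weight_profile p n u.
Proof. by rewrite /weight_profile; case: ifP => _; rewrite ?mulr_ge0 ?expR_ge0 ?(ltW p_gt0). Qed.

Lemma weight_profile_nonincreasing : {homo weight_profile p n : u v /~ u <= v}.
Proof.
move=> u v vu; rewrite /weight_profile; case: ifPn => hv; last exact: weight_profile_ge0.
rewrite (le_trans vu hv) ler_pM2l// ler_expR ler_pM2r ?invr_gt0// lerN2 //.
Qed.

Lemma lnN_le_weight_profile u : - u <= n%:R * ln 2 + weight_profile p n u.
Proof.
rewrite /weight_profile; case: ifPn => hu; last first.
  by rewrite addr0 lerNl ltW// ltNge.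
have l2 := @ln2_gt0 R.
have : - u / p <= expR (- u / p) by have := expR_ge1Dx (- u / p); lra.
rewrite ler_pdivrMr// mulrC => h; apply: le_trans h _.
by rewrite lerDr mulr_ge0// ltW.
Qed.

Lemma powR_weight_profile u : u <= - (n%:R * ln 2) ->
  weight_profile p n u `^ p = p `^ p * expR (- u).
Proof.
move=> hu; rewrite /weight_profile hu powRM ?expR_ge0 ?(ltW p_gt0)// -expRM mulfVK ?gt_eqF//.
Qed.

Lemma weight_ge0 x y : 0 <= weight p n x y.
Proof. exact: weight_profile_ge0. Qed.

Lemma measurable_weight y : measurable_fun [set: R * R] (weight p n ^~ y).
Proof.
apply: measurableT_comp.
  by apply: nonincreasing_measurable => // u v vu; exact: weight_profile_nonincreasing.
apply: measurableT_comp; first exact: measurable_ln.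
apply: measurable_maxr; apply: measurableT_comp (@normr_measurable _ _) _.
- exact: measurable_funB measurable_fst (measurable_cst _).
- exact: measurable_funB measurable_snd (measurable_cst _).
Qed.

Lemma Kker_le_weight x y : x <> y ->
  `|Kker x y| <= 1 + n.+1%:R * ln 2 + weight p n x y.
Proof.
move=> /Kker_le Kxy; apply: le_trans Kxy _.
have W_ge := lnN_le_weight_profile (ln (supdist x y)).
have W0 := weight_ge0 x y; have l2 := @ln2_gt0 R.
have nl2 := mulr_ge0 (ler0n R n) (ltW l2).
rewrite -[n.+1%:R]natr1 mulrDl mul1r -/(weight p n x y) in W_ge *.
by have [h|h] := leP 0 (- ln (supdist x y)); lra.
Qed.

End weight.

Section dyadic_squares.
Variable R : realType.
Implicit Types (r : R) (x y : R * R).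

Definition square y r : set (R * R) :=
  `[y.1 - r, y.1 + r] `*` `[y.2 - r, y.2 + r].

Lemma measurable_square y r : measurable (square y r).
Proof. by apply: measurableX; exact: measurable_itv. Qed.

Lemma leb2_square y r : 0 < r -> leb2 (square y r) = ((2 * r) ^+ 2)%:E.
Proof.
move=> r0; rewrite /leb2 product_measure1E ?measurable_itv// /= !lebesgue_measure_itv/=.
rewrite !lte_fin !ltrD2l gtrN// -!EFinD -EFinM; congr (_%:E); ring.
Qed.

Lemma square_supdist x y r : supdist x y <= r -> square y r x.
Proof. by rewrite ge_max => /andP[h1 h2]; split; rewrite /= in_itv/= -ler_distl. Qed.

Lemma integral_indic_square y r : 0 < r ->
  (\int[leb2]_x (\1_(square y r) x)%:E = ((2 * r) ^+ 2)%:E)%E.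
Proof.
move=> r0; rewrite integral_indic//; last exact: measurable_square.
have -> : square y r `&` setT = square y r by rewrite setIT.
exact: leb2_square r0.
Qed.

End dyadic_squares.

Section weight_integral.
Variable R : realType.
Variables (p : R) (n : nat).
Hypothesis p_gt0 : 0 < p.
Implicit Types (x y : R * R) (j : nat).

Definition dyadic_term y j x : \bar R :=
  ((2 * p `^ p * 2 ^+ (j + n)) * \1_(square y (2 ^+ (j + n))^-1) x)%:E.

Lemma dyadic_term_ge0 y j x : (0 <= dyadic_term y j x)%E.
Proof. by rewrite lee_fin mulr_ge0 ?mulr_ge0 ?powR_ge0 ?exprn_ge0. Qed.

Lemma measurable_dyadic_term y j : measurable_fun [set: R * R] (dyadic_term y j).
Proof.
apply/measurable_EFinP; apply: measurable_funM; first exact: measurable_cst.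
by apply: measurable_indic; exact: measurable_square.
Qed.

Lemma integral_dyadic_term y j :
  (\int[leb2]_x dyadic_term y j x = ((16 * p `^ p) / (2 ^ (j + n.+1))%:R)%:E)%E.
Proof.
have r0 : (0 < (2 ^+ (j + n))^-1 :> R)%R by rewrite invr_gt0 exprn_gt0.
rewrite /dyadic_term; under eq_integral do rewrite EFinM.
rewrite ge0_integralZl_EFin//; last 2 first.
- by apply/measurable_EFinP; apply: measurable_indic; exact: measurable_square.
- by rewrite mulr_ge0 ?mulr_ge0 ?powR_ge0 ?exprn_ge0.
rewrite integral_indic_square// -EFinM.
congr (_%:E); rewrite addnS natrX [in RHS]exprS.
have : (2 ^+ (j + n) : R) != 0 by rewrite expf_neq0.
set q := (2 ^+ (j + n) : R) => q0; by field.
Qed.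

Lemma powR_weight_le_series x y :
  ((weight p n x y `^ p)%:E <= \sum_(j <oo) dyadic_term y j x)%E.
Proof.
have terms_ge0 k : (0 <= k)%N -> true -> (0 <= dyadic_term y k x)%E.
  by move=> *; exact: dyadic_term_ge0.
rewrite /weight; set u := ln (supdist x y).
have [hu|hu] := boolP (u <= - (n%:R * ln 2)); last first.
  by rewrite /weight_profile (negbTE hu) powR0 ?gt_eqF// nneseries_ge0.
have [m [nm um eu]] := dyadic_level hu.
have s0 : (0 <= supdist x y)%R by rewrite le_max normr_ge0.
have x_sq := square_supdist (le_exp2N_of_ln s0 um).
apply: le_trans (nneseries_lim_ge (m - n).+1 terms_ge0).
rewrite big_nat_recr//=; apply: lee_paddl; first by rewrite sume_ge0// => k _; exact: dyadic_term_ge0.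
rewrite /dyadic_term subnK// indicE mem_set// mulr1 lee_fin powR_weight_profile//.
by rewrite (mulrC 2) -mulrA ler_wpM2l ?powR_ge0.
Qed.

Lemma integral_powR_weight_le y :
  (\int[leb2]_x (`|(weight p n x y)%:E| `^ p) <= ((16 * p `^ p) / 2 ^+ n)%:E)%E.
Proof.
have mW : measurable_fun [set: R * R] (fun x => (weight p n x y `^ p)%:E).
  by apply/measurable_EFinP; apply: measurableT_comp (measurable_powR p) _; exact: measurable_weight.
under eq_integral => x _ do rewrite abse_EFin poweR_EFin ger0_norm ?weight_ge0//.
have mS : measurable_fun [set: R * R] (fun x => \sum_(j <oo) dyadic_term y j x)%E.
  by apply: ge0_emeasurable_sum => [k x _ _|k _];
    [exact: dyadic_term_ge0|exact: measurable_dyadic_term].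
apply: le_trans.
  apply: (@ge0_le_integral _ _ _ leb2 setT measurableT _ (fun x => \sum_(j <oo) dyadic_term y j x)%E).
  - by move=> x _; rewrite lee_fin powR_ge0.
  - exact: mW.
  - exact: mS.
  - by move=> x _; exact: powR_weight_le_series.
rewrite integral_nneseries//; last 2 first.
- by move=> k; exact: measurable_dyadic_term.
- by move=> k x _; exact: dyadic_term_ge0.
rewrite (eq_eseriesr (fun j _ => integral_dyadic_term y j)).
by have /cvg_lim <- := @cvg_geometric_eseries_half R (16 * p `^ p) n.
Qed.

End weight_integral.

Lemma Lnorm_le_of_integral d (T : measurableType d) (R : realType)
    (mu : {measure set T -> \bar R}) (p c : R) (f : T -> \bar R) :
  0 < p -> 0 <= c -> (\int[mu]_x `|f x| `^ p <= (c `^ p)%:E)%E ->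
  (Lnorm mu p%:E f <= c%:E)%E.
Proof.
move=> p0 c0 hf; rewrite unlock.
have -> : c = (c `^ p) `^ p^-1 by rewrite -powRrM mulfV ?gt_eqF ?powRr1.
rewrite -poweR_EFin; apply: gt0_ler_poweR => //; first by rewrite invr_ge0 ltW.
- by rewrite in_itv/= leey andbT integral_ge0// => x _; exact: poweR_ge0.
- by rewrite in_itv/= leey andbT lee_fin powR_ge0.
Qed.

Lemma exists_div_exp2_le (R : archiFieldType) (a e : R) : 0 < e ->
  exists n : nat, a / 2 ^+ n <= e.
Proof.
move=> e0; set m := Num.truncn (a / e); exists m.
have m_gt : a / e < m.+1%:R := truncnS_gt _.
have pow_ge : m.+1%:R <= 2 ^+ m :> R by rewrite -natrX ler_nat ltn_expl.
rewrite ler_pdivrMr ?exprn_gt0// -ler_pdivrMl// mulrC.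
exact: le_trans (ltW m_gt) pow_ge.
Qed.

Unset Implicit Arguments.

Theorem lemma2p3 (R : realType) (p eps : R) :
  1 <= p -> 0 < eps ->
  exists (W : R * R -> R * R -> R) (C0 : R),
    (forall x y, 0 <= W x y) /\
    (forall y, measurable_fun [set: R * R] (fun x => W x y)) /\
    (forall y, (Lnorm leb2 p%:E (fun x => (W x y)%:E) <= eps%:E)%E) /\
    (forall x y, x <> y -> `|Kker x y| <= C0 + W x y).
Proof.
move=> p1 eps0; have p0 : 0 < p := lt_le_trans ltr01 p1.
have [n small_n] := exists_div_exp2_le (16 * p `^ p) (powR_gt0 p eps0).
exists (weight p n), (1 + n.+1%:R * ln 2).
split; [|split; [|split]] => [x y|y|y|x y].
- exact: weight_ge0.
- exact: measurable_weight.
- apply: (Lnorm_le_of_integral p0 (ltW eps0)).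
  by apply: le_trans (integral_powR_weight_le n p0 y) _; rewrite lee_fin.
- exact: Kker_le_weight.
Qed.
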